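(* Let $\mathcal W$ be an operator space, $X\in\mathcal W^{n\times n}$, $X'\in\mathcal W^{n'\times n'}$, and let $M,M'\in\mathbb N$ be such that $Mn=M'n'$ is the least common multiple of $n$ and $n'$. Then $\bigl\|\bigoplus_{\alpha=1}^MX-\bigoplus_{\beta=1}^{M'}X'\bigr\|_{Mn}=0$ if and only if there exists $Y\in\mathcal W^{d\times d}$ for some $d$, and $m,m'\in\mathbb N$, such that $X=\bigoplus_{\alpha=1}^mY$ and $X'=\bigoplus_{\beta=1}^{m'}Y$.
   Context: An operator space is a complex Banach space $\mathcal W$ with norms $\|\cdot\|_n$ on $\mathcal W^{n\times n}$ such that $\|X\oplus Y\|_{n+m}=\max\{\|X\|_n,\|Y\|_m\}$ and $\|TXS\|_n\le\|T\|\|X\|_n\|S\|$ for $T,S\in\mathbb C^{n\times n}$, where $X\oplus Y=\begin{bmatrix}X&0\\0&Y\end{bmatrix}$ and $\bigoplus_{\alpha=1}^mY$ denotes the block diagonal matrix with $m$ diagonal blocks equal to $Y$. *)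

From HB Require Import structures.
From mathcomp Require Import all_boot all_order all_algebra.
From mathcomp Require Import complex.
From mathcomp Require Import classical_sets reals.

Set Implicit Arguments.
Unset Strict Implicit.
Unset Printing Implicit Defensive.

Import Order.TTheory GRing.Theory Num.Theory.
Local Open Scope ring_scope.
Local Open Scope classical_set_scope.

Section OperatorSpaceDefs.
Variable R : realType.
Local Notation C := R[i].

Definition cmod (c : C) : R := Num.sqrt (@complex.Re R c ^+ 2 + @complex.Im R c ^+ 2).

Definition vnorm n (v : 'cV[C]_n) : R := Num.sqrt (\sum_i cmod (v i 0) ^+ 2).

Definition opnorm n (T : 'M[C]_n) : R :=
  sup [set vnorm (T *m v) | v in [set v : 'cV[C]_n | vnorm v <= 1]].

Variable V : lmodType C.

Definition scalemxV n (c : C) (X : 'M[V]_n) : 'M[V]_n :=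
  \matrix_(i, j) (c *: X i j).

Definition cmulmx n (T : 'M[C]_n) (X : 'M[V]_n) (S : 'M[C]_n) : 'M[V]_n :=
  \matrix_(i, j) \sum_(k < n) \sum_(l < n) (T i k * S l j) *: X k l.

Definition dsum n m (X : 'M[V]_n) (Y : 'M[V]_m) : 'M[V]_(n + m) :=
  block_mx X 0 0 Y.

Definition bdiag_size m d : \sum_(i < m) d = (m * d)%N.
Proof. by rewrite big_const_ord iter_addn_0 mulnC. Qed.

Definition bdiag m d (Y : 'M[V]_d) : 'M[V]_(m * d) :=
  castmx (bdiag_size m d, bdiag_size m d) (\mxdiag_(i < m) Y).

End OperatorSpaceDefs.

(* A complex operator space: a complex Banach space W together with norms
   ||.||_n on W^{n x n} satisfying Ruan's axioms. *)
Record operator_space (R : realType) := OperatorSpace {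
  os_carrier :> lmodType R[i];
  os_norm : forall n, 'M[os_carrier]_n -> R;
  os_norm_ge0 : forall n (X : 'M[os_carrier]_n), 0 <= os_norm X;
  os_norm_eq0 : forall n (X : 'M[os_carrier]_n), os_norm X = 0 -> X = 0;
  os_normZ : forall n (c : R[i]) (X : 'M[os_carrier]_n),
      os_norm (scalemxV c X) = cmod c * os_norm X;
  os_normD : forall n (X Y : 'M[os_carrier]_n),
      os_norm (X + Y) <= os_norm X + os_norm Y;
  os_complete : forall u : nat -> os_carrier,
      (forall e : R, 0 < e -> exists N, forall p q, (N <= p)%N -> (N <= q)%N ->
         os_norm (const_mx (u p - u q) : 'M_1) < e) ->
      exists l : os_carrier, forall e : R, 0 < e -> exists N, forall p, (N <= p)%N ->
         os_norm (const_mx (u p - l) : 'M_1) < e;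
  os_norm_dsum : forall n m (X : 'M[os_carrier]_n) (Y : 'M[os_carrier]_m),
      os_norm (dsum X Y) = Num.max (os_norm X) (os_norm Y);
  os_norm_mul : forall n (T S : 'M[R[i]]_n) (X : 'M[os_carrier]_n),
      os_norm (cmulmx T X S) <= opnorm T * os_norm X * opnorm S
}.

From HB Require Import structures.
From mathcomp Require Import all_boot all_order all_algebra.
From mathcomp Require Import complex.
From mathcomp Require Import classical_sets reals.
From mathcomp Require Import zify.
Import Order.TTheory GRing.Theory Num.Theory.

Set Implicit Arguments.
Unset Strict Implicit.

(* A matrix Z of size L is read as the function (a, b) |-> Z a b
   on nat x nat, and a block diagonal sum with blocks of size k as the function
   [bdiagf k G], which is G on the residues mod k along the diagonal blocks and
   0 off them.  If the two sums agree on [0, L)^2, with L = lcm n n', pick by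
   Bezout a multiple c = k n + g of n' (g = gcd n n') with (k + 1) n <= L.
   Translating by c is harmless for the n'-blocks but shifts the n-blocks by g,
   so the entries of X are invariant under diagonal translation by g; and c
   separates positions that lie in the same n-block but in distinct g-blocks,
   so X vanishes off the g-blocks.  Hence X is the sum of copies of its top
   left g x g block Y, and likewise X', whose top left block agrees with Y.
   Conversely, both sums are then block sums of Y, and a norm vanishes exactly
   at 0. *)

Lemma lcm_block_shift n n' : 0 < n' -> gcdn n n' < n ->
  exists2 k, n' %| k * n + gcdn n n' & k.+1 * n <= lcmn n n'.
Proof.
move=> n'0 gn; have n0 : 0 < n by apply: leq_ltn_trans gn.
have L0 : 0 < lcmn n n' by rewrite lcmn_gt0 n0.
have [km kn def _] := egcdnP n n'0.
set c := km * n' %% lcmn n n'.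
have cn : c %% n = gcdn n n'.
  by rewrite /c (modn_dvdm _ (dvdn_lcml n n')) def modnMDl gcdnC modn_small.
have ec : c = c %/ n * n + gcdn n n' by rewrite {1}(divn_eq c n) cn.
exists (c %/ n); first by rewrite /dvdn -ec /c (modn_dvdm _ (dvdn_lcmr n n')) modnMl.
have /dvdnP [M eM] := dvdn_lcml n n'.
have : c %/ n * n < lcmn n n'.
  by apply: leq_ltn_trans (ltn_pmod (km * n') L0); rewrite -/c {2}ec leq_addr.
by rewrite eM ltn_pmul2r // leq_pmul2r.
Qed.

Section BlockDiagonalFunctions.
Variable V : zmodType.
Implicit Types (G : nat -> nat -> V) (k : nat).

Definition bdiagf k G a b : V :=
  if a %/ k == b %/ k then G (a %% k) (b %% k) else 0%R.

Lemma bdiagf_small k G a b : a < k -> b < k -> bdiagf k G a b = G a b.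
Proof. by move=> ak bk; rewrite /bdiagf !divn_small // !modn_small. Qed.

Lemma bdiagf_block k G q a b : a < k -> b < k ->
  bdiagf k G (q * k + a) (q * k + b) = G a b.
Proof.
move=> ak bk; have k0 : 0 < k by apply: leq_ltn_trans ak.
by rewrite /bdiagf !divnMDl // !divn_small // !modnMDl !modn_small // eqxx.
Qed.

Lemma bdiagf_shift k G q a b : 0 < k ->
  bdiagf k G (q * k + a) (q * k + b) = bdiagf k G a b.
Proof. by move=> k0; rewrite /bdiagf !divnMDl // !modnMDl eqn_add2l. Qed.

Lemma bdiagf_straddle k G c a b : 0 < k -> k %| c -> a < c <= b ->
  bdiagf k G a b = 0%R /\ bdiagf k G b a = 0%R.
Proof.
move=> k0 /dvdnP [q ->] /andP [ac cb].
have aq : a %/ k < q by rewrite ltn_divLR.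
have qb : q <= b %/ k by rewrite leq_divRL.
by rewrite /bdiagf ltn_eqF ?gtn_eqF // (leq_trans aq qb).
Qed.

Lemma eq_bdiagf k G G' : 0 < k ->
  (forall a b, a < k -> b < k -> G a b = G' a b) -> bdiagf k G =2 bdiagf k G'.
Proof. by move=> k0 eqG a b; rewrite /bdiagf eqG ?ltn_pmod. Qed.

Lemma bdiagf_bdiagf k d G a b : 0 < k -> d %| k ->
  bdiagf k (bdiagf d G) a b = bdiagf d G a b.
Proof.
move=> k0 /dvdnP [m km]; have d0 : 0 < d by move: k0; rewrite km muln_gt0 => /andP[].
rewrite {1}/bdiagf; case: eqP => [ab | ab].
  by rewrite [in RHS](divn_eq a k) [in RHS](divn_eq b k) -ab km mulnA bdiagf_shift.
rewrite /bdiagf ifF //; apply/eqP => abd; apply: ab.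
by rewrite km mulnC !divnMA abd.
Qed.

End BlockDiagonalFunctions.

Section GcdPeriod.
Variable V : zmodType.
Variables (n n' : nat) (F F' : nat -> nat -> V).
Hypotheses (n0 : 0 < n) (n'0 : 0 < n').
Local Notation g := (gcdn n n').
Local Notation L := (lcmn n n').
Hypothesis eqF : forall a b, a < L -> b < L -> bdiagf n F a b = bdiagf n' F' a b.

Let g0 : 0 < g. Proof. by rewrite gcdn_gt0 n0. Qed.
Let nL : n <= L. Proof. by rewrite dvdn_leq ?lcmn_gt0 ?n0 ?dvdn_lcml. Qed.

Lemma gcd_shift_eq i j : i + g < n -> j + g < n -> F (i + g) (j + g) = F i j.
Proof.
move=> ig jg; have gn : g < n by apply: leq_ltn_trans ig; rewrite leq_addl.
have [k /dvdnP [q kq] kL] := lcm_block_shift n'0 gn.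
have [ciL cjL] : k * n + g + i < L /\ k * n + g + j < L.
  by split; apply: leq_trans kL; rewrite mulSn; lia.
rewrite -[LHS](@bdiagf_block _ n F k) // [i + g]addnC [j + g]addnC !addnA.
by rewrite eqF // kq bdiagf_shift // -eqF ?bdiagf_small //; lia.
Qed.

Lemma gcd_cross_eq0 p j : p < g <= j -> j < n -> F p j = 0%R /\ F j p = 0%R.
Proof.
move=> /andP [pg gj] jn; have pn : p < n by lia.
have [k n'c kL] := lcm_block_shift n'0 (leq_ltn_trans gj jn).
have [bL aL] : k * n + j < L /\ k * n + p < L by split; apply: leq_trans kL; lia.
have [] : bdiagf n' F' (k * n + p) (k * n + j) = 0%R /\
          bdiagf n' F' (k * n + j) (k * n + p) = 0%R.
  by apply: bdiagf_straddle n'c _; lia.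
by rewrite -!eqF // !bdiagf_block.
Qed.

Lemma gcd_shiftn_eq k i j : i + k * g < n -> j + k * g < n ->
  F (i + k * g) (j + k * g) = F i j.
Proof.
elim: k => [|k IH] ik jk; first by rewrite !mul0n !addn0.
by rewrite mulSnr !addnA gcd_shift_eq -?addnA -?mulSnr // IH //; lia.
Qed.

Lemma gcd_cross_block_eq0 i j : i %/ g < j %/ g -> j < n ->
  F i j = 0%R /\ F j i = 0%R.
Proof.
set a := i %/ g => aj jn.
have ei : i = i %% g + a * g by rewrite addnC -divn_eq.
have gj : a * g + g <= j.
  by rewrite -mulSnr (leq_trans _ (leq_divM j g)) // leq_mul2r aj orbT.
set s := j - a * g.
have ej : j = s + a * g by rewrite subnK // (leq_trans (leq_addr g _) gj).
have gs : g <= s by rewrite leq_subRL // (leq_trans (leq_addr g _) gj).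
have ij : i < j by rewrite {1}ei (leq_trans _ gj) // addnC ltn_add2l ltn_pmod.
have i_n := ltn_trans ij jn.
rewrite ei ej !gcd_shiftn_eq -?ei -?ej //.
by apply: gcd_cross_eq0; rewrite ?ltn_pmod ?gs ?(leq_ltn_trans (leq_subr _ _) jn).
Qed.

Lemma gcd_bdiagf i j : i < n -> j < n -> F i j = bdiagf g F i j.
Proof.
move=> i_n j_n; rewrite /bdiagf; case: ltngtP => [ij | ji | ij].
- by case: (gcd_cross_block_eq0 ij j_n).
- by case: (gcd_cross_block_eq0 ji i_n).
have ei : i = i %% g + i %/ g * g by rewrite addnC -divn_eq.
have ej : j = j %% g + i %/ g * g by rewrite ij addnC -divn_eq.
have i_n' : i %% g + i %/ g * g < n by rewrite -ei.
have j_n' : j %% g + i %/ g * g < n by rewrite -ej.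
by rewrite {1}ei {1}ej gcd_shiftn_eq.
Qed.

Lemma gcd_block_eq a b : a < g -> b < g -> F a b = F' a b.
Proof.
have gn : g <= n by rewrite dvdn_leq ?dvdn_gcdl.
have gn' : g <= n' by rewrite dvdn_leq ?dvdn_gcdr.
move=> ag bg; have [an bn] := conj (leq_trans ag gn) (leq_trans bg gn).
have [an' bn'] := conj (leq_trans ag gn') (leq_trans bg gn').
rewrite -(bdiagf_small F an bn) eqF ?bdiagf_small //.
- exact: leq_trans an nL.
- exact: leq_trans bn nL.
Qed.

End GcdPeriod.

Section MatrixEntries.
Variable R : realType.
Variable V : lmodType R[i].

Definition nat_entry d (Y : 'M[V]_d) (a b : nat) : V :=
  if insub a is Some i then if insub b is Some j then Y i j else 0%R else 0%R.

Lemma nat_entryE d (Y : 'M[V]_d) (i j : 'I_d) : nat_entry Y i j = Y i j.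
Proof. by rewrite /nat_entry !valK. Qed.

Lemma nat_entry_ord d (Y : 'M[V]_d) a b (ad : a < d) (bd : b < d) :
  nat_entry Y a b = Y (Ordinal ad) (Ordinal bd).
Proof. exact: (nat_entryE Y (Ordinal ad) (Ordinal bd)). Qed.

Lemma tagnat_const_sig m d (s : 'I_(\sum_(i < m) d)) :
  (s : nat) = tagnat.sig1 s * d + tagnat.sig2 s.
Proof.
rewrite {1}(tagnat.rect s); congr (_ + _).
by rewrite (big_ord_narrow (ltnW (ltn_ord (tagnat.sig1 s)))) sum_nat_const card_ord.
Qed.

Lemma castmx_bdiagE m d k (e : m * d = k) (Y : 'M[V]_d) (a b : 'I_k) :
  castmx (e, e) (bdiag m Y) a b = bdiagf d (nat_entry Y) a b.
Proof.
rewrite castmxE /bdiag castmxE /mxdiag /mxblock mxE.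
set s := cast_ord _ (cast_ord _ a); set t := cast_ord _ (cast_ord _ b).
have [-> ->] : (a : nat) = s /\ (b : nat) = t by [].
have d0 : 0 < d by case: (tagnat.sig2 s) => i /(leq_ltn_trans (leq0n i)).
rewrite /bdiagf (tagnat_const_sig s) (tagnat_const_sig t) !divnMDl // !modnMDl.
rewrite !divn_small // !modn_small // !addn0 (inj_eq val_inj).
by case: eqP => _; rewrite ?conform_mx_id ?nat_entryE ?mxE.
Qed.

Lemma nat_entry_castmx_bdiag m d k (e : m * d = k) (Y : 'M[V]_d) a b :
  a < k -> b < k ->
  nat_entry (castmx (e, e) (bdiag m Y)) a b = bdiagf d (nat_entry Y) a b.
Proof. by move=> ak bk; rewrite nat_entry_ord castmx_bdiagE. Qed.

Lemma bdiagf_castmx_bdiag m d k (e : m * d = k) (Y : 'M[V]_d) a b : 0 < k ->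
  bdiagf k (nat_entry (castmx (e, e) (bdiag m Y))) a b = bdiagf d (nat_entry Y) a b.
Proof.
move=> k0; rewrite (eq_bdiagf k0 (nat_entry_castmx_bdiag e Y)).
by rewrite bdiagf_bdiagf // -e dvdn_mull.
Qed.

Lemma castmx_bdiag1 d (e : 1 * d = d) (Y : 'M[V]_d) : castmx (e, e) (bdiag 1 Y) = Y.
Proof. by apply/matrixP => i j; rewrite castmx_bdiagE bdiagf_small // nat_entryE. Qed.

Definition has_common_block n n' (X : 'M[V]_n) (X' : 'M[V]_n') :=
  exists (d : nat) (Y : 'M[V]_d) (m m' : nat)
         (e : m * d = n) (e' : m' * d = n'),
    X = castmx (e, e) (bdiag m Y) /\ X' = castmx (e', e') (bdiag m' Y).

Lemma has_common_blockC n n' (X : 'M[V]_n) (X' : 'M[V]_n') :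
  has_common_block X X' -> has_common_block X' X.
Proof. by move=> [d [Y [m [m' [e [e' [-> ->]]]]]]]; exists d, Y, m', m, e', e. Qed.

Lemma has_common_block_0r n n' (X : 'M[V]_n) (X' : 'M[V]_n') :
  n' = 0 -> has_common_block X X'.
Proof.
move=> n'0; have e' : 0 * n = n' by rewrite mul0n n'0.
exists n, X, 1, 0, (mul1n n), e'; rewrite castmx_bdiag1; split=> //.
by apply/matrixP => i; have := ltn_ord i; rewrite {2}n'0.
Qed.

Lemma has_common_block_of_bdiag_eq n n' (X : 'M[V]_n) (X' : 'M[V]_n') M M'
    (e : M * n = lcmn n n') (e' : M' * n' = lcmn n n') :
  castmx (e, e) (bdiag M X) = castmx (e', e') (bdiag M' X') -> has_common_block X X'.
Proof.
move=> eqX; have [n0 | n0] := posnP n; first exact/has_common_blockC/has_common_block_0r.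
have [n'0 | n'0] := posnP n'; first exact: has_common_block_0r.
set F := nat_entry X; set F' := nat_entry X'.
have eqF a b : a < lcmn n n' -> b < lcmn n n' -> bdiagf n F a b = bdiagf n' F' a b.
  by move=> aL bL; rewrite -(nat_entry_castmx_bdiag e) // eqX nat_entry_castmx_bdiag.
have eqF' a b : a < lcmn n' n -> b < lcmn n' n -> bdiagf n' F' a b = bdiagf n F a b.
  by rewrite lcmnC => aL bL; rewrite eqF.
have g0 : 0 < gcdn n n' by rewrite gcdn_gt0 n0.
pose Y : 'M[V]_(gcdn n n') := (\matrix_(i, j) F i j)%R.
have FY : forall a b, a < gcdn n n' -> b < gcdn n n' -> F a b = nat_entry Y a b.
  by move=> a b ag bg; rewrite nat_entry_ord mxE.
exists (gcdn n n'), Y, (n %/ gcdn n n'), (n' %/ gcdn n n'),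
  (divnK (dvdn_gcdl n n')), (divnK (dvdn_gcdr n n')).
split; apply/matrixP => i j; rewrite castmx_bdiagE -nat_entryE.
- by rewrite -/F (gcd_bdiagf n0 n'0 eqF) //; exact: eq_bdiagf g0 FY i j.
rewrite -/F' (gcd_bdiagf n'0 n0 eqF') // gcdnC; apply: (eq_bdiagf g0 _ i j) => a b ag bg.
by rewrite -(gcd_block_eq n0 n'0 eqF) ?FY.
Qed.

Lemma bdiag_eq_of_common_block n n' (X : 'M[V]_n) (X' : 'M[V]_n') M M' k
    (e : M * n = k) (e' : M' * n' = k) :
  has_common_block X X' -> castmx (e, e) (bdiag M X) = castmx (e', e') (bdiag M' X').
Proof.
move=> [d [Y [m [m' [em [em' [-> ->]]]]]]]; apply/matrixP => a b.
have k0 : 0 < k by apply: leq_ltn_trans (ltn_ord a).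
have n0 : 0 < n by move: k0; rewrite -e muln_gt0 => /andP [].
have n'0 : 0 < n' by move: k0; rewrite -e' muln_gt0 => /andP [].
by rewrite !castmx_bdiagE !bdiagf_castmx_bdiag.
Qed.

End MatrixEntries.

Local Open Scope ring_scope.

Lemma os_norm0 (R : realType) (W : operator_space R) n : os_norm (0 : 'M[W]_n) = 0.
Proof.
have -> : (0 : 'M[W]_n) = scalemxV 0 0 by apply/matrixP => i j; rewrite !mxE scale0r.
by rewrite os_normZ /cmod /= expr0n addr0 sqrtr0 mul0r.
Qed.

Theorem proposition7p14 (R : realType) (W : operator_space R)
    (n n' : nat) (X : 'M[W]_n) (X' : 'M[W]_n') (M M' : nat)
    (hM : (M * n)%N = lcmn n n') (hM' : (M' * n')%N = lcmn n n') :
  os_norm (castmx (hM, hM) (bdiag M X) - castmx (hM', hM') (bdiag M' X')) = 0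
  <->
  exists (d : nat) (Y : 'M[W]_d) (m m' : nat)
         (e : (m * d)%N = n) (e' : (m' * d)%N = n'),
    X = castmx (e, e) (bdiag m Y) /\ X' = castmx (e', e') (bdiag m' Y).
Proof.
split=> [/os_norm_eq0/eqP | /(bdiag_eq_of_common_block hM hM') ->].
- by rewrite subr_eq0 => /eqP; apply: has_common_block_of_bdiag_eq.
- by rewrite subrr os_norm0.
Qed.
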